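(* Let $\mathbf{S}=\mathbf{V}\boldsymbol{\Lambda}\mathbf{V}^{\mathsf{H}}$ and $\hat{\mathbf{S}}$ be $N\times N$ graph shift operators, and let $\mathbf{h}$ be an integral Lipschitz filter with integral Lipschitz constant $C$. Assume there exists a relative perturbation matrix $\mathbf{E}=\mathbf{U}\mathbf{M}\mathbf{U}^{\mathsf{H}}\in\mathcal{E}(\mathbf{S},\hat{\mathbf{S}})$ with $d(\mathbf{S},\hat{\mathbf{S}})\le\|\mathbf{E}\|\le\varepsilon$ that furthermore satisfies $$\min\left[\left\|\frac{\mathbf{E}}{\|\mathbf{E}\|}-\mathbf{I}\right\|,\ \left\|\frac{\mathbf{E}}{\|\mathbf{E}\|}+\mathbf{I}\right\|\right]\le\varepsilon.$$ Then $$\|\mathbf{H}(\mathbf{S})-\mathbf{H}(\hat{\mathbf{S}})\|_{\mathcal{P}}\le 2C\varepsilon+\mathcal{O}(\varepsilon^2).$$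
   Context: A graph shift operator is a real symmetric $N\times N$ matrix; $\mathbf{S}=\mathbf{V}\boldsymbol{\Lambda}\mathbf{V}^{\mathsf{H}}$ with $\mathbf{V}$ orthonormal eigenvectors and $\boldsymbol{\Lambda}$ diagonal; $\mathbf{E}$ is symmetric with $\mathbf{U}$ orthonormal and $\mathbf{M}$ diagonal. $\|\cdot\|$ denotes the spectral norm (Euclidean norm for vectors). $\mathcal{P}$ is the set of $N\times N$ permutation matrices. $\mathcal{E}(\mathbf{S},\hat{\mathbf{S}})=\{\mathbf{E}:\mathbf{P}^{\mathsf{T}}\hat{\mathbf{S}}\mathbf{P}=\mathbf{S}+(\mathbf{E}\mathbf{S}+\mathbf{S}\mathbf{E})\text{ for some }\mathbf{P}\in\mathcal{P}\}$, and $d(\mathbf{S},\hat{\mathbf{S}})=\min\{\|\mathbf{E}\|:\mathbf{P}\in\mathcal{P},\ \mathbf{P}^{\mathsf{T}}\hat{\mathbf{S}}\mathbf{P}=\mathbf{S}+\mathbf{E}\mathbf{S}+\mathbf{S}\mathbf{E}\}$. For linear operators, $\|\mathbf{A}-\hat{\mathbf{A}}\|_{\mathcal{P}}=\min_{\mathbf{P}\in\mathcal{P}}\max_{\|\mathbf{x}\|=1}\|\mathbf{P}^{\mathsf{T}}(\mathbf{A}\mathbf{x})-\hat{\mathbf{A}}(\mathbf{P}^{\mathsf{T}}\mathbf{x})\|$. A filter $\mathbf{h}=\{h_k\}_{k\ge0}$ defines $\mathbf{H}(\mathbf{S})=\sum_k h_k\mathbf{S}^k$ and frequency response $h(\lambda)=\sum_k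 h_k\lambda^k$ (analytic), with $|h(\lambda)|\le1$; it is integral Lipschitz with constant $C>0$ if $|h(\lambda_2)-h(\lambda_1)|\le C\,\frac{|\lambda_2-\lambda_1|}{|\lambda_1+\lambda_2|/2}$ for all $\lambda_1,\lambda_2$. $\mathcal{O}(\varepsilon^2)$ denotes a term bounded by a constant times $\varepsilon^2$. *)

From HB Require Import structures.
From mathcomp Require Import all_boot all_order all_algebra all_fingroup.
From mathcomp Require Import all_classical all_reals all_analysis.
Set Implicit Arguments. Unset Strict Implicit. Unset Printing Implicit Defensive.
Import Order.TTheory GRing.Theory Num.Theory.
Import numFieldNormedType.Exports.
Local Open Scope classical_set_scope.
Local Open Scope ring_scope.

Section Defs.
Variable R : realType.

Definition symmetric_mx N (A : 'M[R]_N) : Prop := A^T = A.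

(* Orthonormal (real orthogonal) matrix: V^H V = I (V^H = V^T over R). *)
Definition orthonormal_mx N (V : 'M[R]_N) : Prop := V^T *m V = 1%:M.

Definition enorm N (x : 'cV[R]_N) : R := Num.sqrt (\sum_i (x i 0) ^+ 2).

Definition specnorm N (A : 'M[R]_N) : R :=
  sup [set enorm (A *m x) | x in [set x : 'cV[R]_N | enorm x = 1]].

Definition perm_dist N (A Ahat : 'M[R]_N) : R :=
  inf [set sup [set enorm ((perm_mx s)^T *m (A *m x) - Ahat *m ((perm_mx s)^T *m x))
               | x in [set x : 'cV[R]_N | enorm x = 1]]
       | s in [set: 'S_N]].

Definition rel_pert_set N (S Shat : 'M[R]_N) : set 'M[R]_N :=
  [set E | exists s : 'S_N,
     (perm_mx s)^T *m Shat *m perm_mx s = S + (E *m S + S *m E)].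

Definition rel_pert_dist N (S Shat : 'M[R]_N) : R :=
  inf [set specnorm E | E in rel_pert_set S Shat].

Definition freq_resp (h : nat -> R) (l : R) : R :=
  limn (series (fun k => h k * l ^+ k)).

Definition graph_filter N (h : nat -> R) (S : 'M[R]_N) : 'M[R]_N :=
  \matrix_(i, j) limn (series (fun k => h k * (S ^+ k) i j)).

Definition analytic_filter (h : nat -> R) : Prop :=
  forall l : R, cvgn (series (fun k => h k * l ^+ k)).

Definition bounded_filter (h : nat -> R) : Prop :=
  forall l : R, `|freq_resp h l| <= 1.

(* Integral Lipschitz with constant C, written multiplicatively:
   |h(l2) - h(l1)| * (|l1 + l2| / 2) <= C * |l2 - l1|. *)
Definition integral_lipschitz (h : nat -> R) (C : R) : Prop :=
  0 < C /\
  forall l1 l2 : R,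
    `|freq_resp h l2 - freq_resp h l1| * (`|l1 + l2| / 2) <= C * `|l2 - l1|.

End Defs.

From HB Require Import structures.
From mathcomp Require Import all_boot all_order all_algebra all_fingroup.
From mathcomp Require Import all_classical all_reals all_analysis.
From mathcomp Require Import complex ring lra.
Import Order.TTheory GRing.Theory Num.Theory.
Import numFieldNormedType.Exports.
Set Implicit Arguments. Unset Strict Implicit. Unset Printing Implicit Defensive.
Local Open Scope classical_set_scope.
Local Open Scope ring_scope.

(* After relabelling the nodes, Shat = S + E S + S E with E close to +-|E| I, so Shat
   is the dilation (1 + 2 d) S of S, |d| = |E|, up to an error of size O(eps^2 |S|).
   By the spectral theorem the dilation moves H by at most
   sup_l |h(l) - h((1 + 2 d) l)|, which the integral Lipschitz condition bounds by
   2 C |d| + O(d^2); the remaining error costs O(eps^2), since a power series is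
   Lipschitz on bounded matrices.  For eps >= 1/4 the trivial bound
   |H(S)| + |H(Shat)| <= 2 <= 32 eps^2 suffices. *)

Section EuclideanNorm.
Variable R : realType.

Lemma enorm_ge0 N (x : 'cV[R]_N) : 0 <= enorm x.
Proof. exact: sqrtr_ge0. Qed.

Lemma sum_sqr_ge0 N (a : 'I_N -> R) : 0 <= \sum_i a i ^+ 2.
Proof. by apply: sumr_ge0 => i _; exact: sqr_ge0. Qed.

Lemma enorm_sqr N (x : 'cV[R]_N) : enorm x ^+ 2 = \sum_i x i 0 ^+ 2.
Proof. by rewrite sqr_sqrtr // sum_sqr_ge0. Qed.

Lemma enormZ N (c : R) (x : 'cV[R]_N) : enorm (c *: x) = `|c| * enorm x.
Proof.
rewrite /enorm -sqrtr_sqr -sqrtrM ?sqr_ge0 // mulr_sumr.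
by congr Num.sqrt; apply: eq_bigr => i _; rewrite !mxE exprMn.
Qed.

Lemma enorm0 N : enorm (0 : 'cV[R]_N) = 0.
Proof. by rewrite -(scale0r (0 : 'cV[R]_N)) enormZ normr0 mul0r. Qed.

Lemma enormN N (x : 'cV[R]_N) : enorm (- x) = enorm x.
Proof. by rewrite -scaleN1r enormZ normrN1 mul1r. Qed.

Lemma cauchy_schwarz N (a b : 'I_N -> R) :
  (\sum_i a i * b i) ^+ 2 <= (\sum_i a i ^+ 2) * (\sum_i b i ^+ 2).
Proof.
set p := \sum_i a i ^+ 2; set q := \sum_i b i ^+ 2; set s := \sum_i a i * b i.
have [q0|q_gt0] := eqVneq q 0.
  have b0 i : b i = 0.
    by apply/eqP; rewrite -sqrf_eq0; apply/eqP/(psumr_eq0P _ q0) => // j _; exact: sqr_ge0.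
  by rewrite /s big1 ?expr0n ?mulr_ge0 ?sum_sqr_ge0 // => i _; rewrite b0 mulr0.
(* [q (q p - s^2)] is the sum of the squares [(q a_i - s b_i)^2]. *)
have : 0 <= q * (q * p - s ^+ 2).
  have -> : q * (q * p - s ^+ 2) = \sum_i (q * a i - s * b i) ^+ 2.
    transitivity (\sum_i (q ^+ 2 * a i ^+ 2 - (2 * q * s) * (a i * b i) + s ^+ 2 * b i ^+ 2)).
      by rewrite big_split /= sumrB -!mulr_sumr -/p -/q -/s; ring.
    by apply: eq_bigr => i _; ring.
  exact: sum_sqr_ge0.
by rewrite pmulr_rge0 ?subr_ge0 1?mulrC // lt0r q_gt0 sum_sqr_ge0.
Qed.

Lemma enormD N (x y : 'cV[R]_N) : enorm (x + y) <= enorm x + enorm y.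
Proof.
rewrite -(@ler_pXn2r _ 2) ?nnegrE ?addr_ge0 ?enorm_ge0 //.
rewrite enorm_sqr sqrrD !enorm_sqr.
have -> : \sum_i (x + y) i 0 ^+ 2 =
    \sum_i x i 0 ^+ 2 + 2 * \sum_i x i 0 * y i 0 + \sum_i y i 0 ^+ 2.
  by rewrite mulr_sumr -!big_split /=; apply: eq_bigr => i _; rewrite !mxE; ring.
rewrite -addrA -[leRHS]addrA lerD2l lerD2r -[leRHS]mulr_natl ler_wpM2l //.
rewrite (le_trans (ler_norm _)) // -sqrtr_sqr /enorm -sqrtrM ?sum_sqr_ge0 //.
by rewrite ler_wsqrtr // cauchy_schwarz.
Qed.

Lemma normr_entry_le_enorm N (x : 'cV[R]_N) i : `|x i 0| <= enorm x.
Proof.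
by rewrite -sqrtr_sqr ler_wsqrtr // (bigD1 i) //= lerDl sumr_ge0 // => j _; exact: sqr_ge0.
Qed.

Lemma enorm_eq0 N (x : 'cV[R]_N) : enorm x = 0 -> x = 0.
Proof.
move=> x0; apply/matrixP => i j; rewrite ord1 mxE.
by apply/eqP; rewrite -normr_le0 -x0 normr_entry_le_enorm.
Qed.

Lemma enorm_le_sum_norm N (x : 'cV[R]_N) : enorm x <= \sum_i `|x i 0|.
Proof.
rewrite -(@ler_pXn2r _ 2) ?nnegrE ?enorm_ge0 ?sumr_ge0 // enorm_sqr expr2 mulr_suml.
apply: ler_sum => i _; rewrite -real_normK ?num_real // expr2 ler_wpM2l //.
by rewrite (bigD1 i) //= lerDl sumr_ge0.
Qed.

Lemma enorm_orthomx N (Q : 'M[R]_N) (x : 'cV[R]_N) : Q^T *m Q = 1%:M -> enorm (Q *m x) = enorm x.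
Proof.
have sum_sqrE (y : 'cV[R]_N) : \sum_i y i 0 ^+ 2 = (y^T *m y) 0 0.
  by rewrite mxE; apply: eq_bigr => i _; rewrite mxE expr2.
by move=> QtQ; rewrite /enorm !sum_sqrE trmx_mul mulmxA -(mulmxA _ Q^T) QtQ mulmx1.
Qed.

End EuclideanNorm.

Section OperatorBound.
Variable R : realType.

Definition opnorm_le N (A : 'M[R]_N) (c : R) : Prop :=
  forall x, enorm (A *m x) <= c * enorm x.

Definition entry_norm_sum N (A : 'M[R]_N) : R := \sum_i \sum_j `|A i j|.

Lemma entry_norm_sum_ge0 N (A : 'M[R]_N) : 0 <= entry_norm_sum A.
Proof. by apply: sumr_ge0 => i _; apply: sumr_ge0. Qed.

Lemma opnorm_le_entry_norm_sum N (A : 'M[R]_N) : opnorm_le A (entry_norm_sum A).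
Proof.
move=> x; apply: le_trans (enorm_le_sum_norm _) _.
rewrite /entry_norm_sum mulr_suml; apply: ler_sum => i _.
rewrite mxE mulr_suml; apply: le_trans (ler_norm_sum _ _ _) _; apply: ler_sum => j _.
by rewrite normrM ler_wpM2l // normr_entry_le_enorm.
Qed.

Lemma opnorm_le_trans N (A : 'M[R]_N) c c' : opnorm_le A c -> c <= c' -> opnorm_le A c'.
Proof. by move=> Ac le_cc' x; apply: le_trans (Ac x) _; rewrite ler_wpM2r ?enorm_ge0. Qed.

Lemma opnorm_le1 N : opnorm_le (1%:M : 'M[R]_N) 1.
Proof. by move=> x; rewrite mul1mx mul1r. Qed.

Lemma opnorm_le0 N c : 0 <= c -> opnorm_le (0 : 'M[R]_N) c.
Proof. by move=> c0 x; rewrite mul0mx enorm0 mulr_ge0 ?enorm_ge0. Qed.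

Lemma opnorm_leN N (A : 'M[R]_N) c : opnorm_le A c -> opnorm_le (- A) c.
Proof. by move=> Ac x; rewrite mulNmx enormN. Qed.

Lemma opnorm_leD N (A B : 'M[R]_N) a b :
  opnorm_le A a -> opnorm_le B b -> opnorm_le (A + B) (a + b).
Proof.
move=> Aa Bb x; rewrite mulmxDl mulrDl; apply: le_trans (enormD _ _) _.
exact: lerD.
Qed.

Lemma opnorm_leZ N (A : 'M[R]_N) a (k : R) :
  opnorm_le A a -> opnorm_le (k *: A) (`|k| * a).
Proof. by move=> Aa x; rewrite -scalemxAl enormZ -mulrA ler_wpM2l. Qed.

Lemma opnorm_leM N (A B : 'M[R]_N) a b :
  0 <= a -> opnorm_le A a -> opnorm_le B b -> opnorm_le (A *m B) (a * b).
Proof.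
move=> a0 Aa Bb x; rewrite -mulmxA; apply: le_trans (Aa _) _.
by rewrite -mulrA ler_wpM2l.
Qed.

Lemma opnorm_leX N (A : 'M[R]_N) a k :
  0 <= a -> opnorm_le A a -> opnorm_le (A ^+ k) (a ^+ k).
Proof.
move=> a0 Aa; elim: k => [|k IHk]; first by rewrite !expr0; exact: opnorm_le1.
by rewrite !exprS; apply: opnorm_leM.
Qed.

Lemma opnorm_le_sum N n (F : 'I_n -> 'M[R]_N) (c : 'I_n -> R) :
  (forall k, opnorm_le (F k) (c k)) -> opnorm_le (\sum_k F k) (\sum_k c k).
Proof.
elim: n F c => [|n IHn] F c Fc; first by rewrite !big_ord0; exact: opnorm_le0.
by rewrite !big_ord_recr; apply: opnorm_leD => //; exact: IHn.
Qed.

Lemma opnorm_le_mulmx_orthomx N (A Q : 'M[R]_N) a :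
  Q^T *m Q = 1%:M -> opnorm_le A a -> opnorm_le (A *m Q) a.
Proof. by move=> QtQ Aa x; rewrite -mulmxA -(enorm_orthomx x QtQ). Qed.

Lemma opnorm_le_conj_orthomx N (Q A : 'M[R]_N) a :
  Q^T *m Q = 1%:M -> opnorm_le A a -> opnorm_le (Q *m A *m Q^T) a.
Proof.
move=> QtQ Aa x; have QQt : Q^T^T *m Q^T = 1%:M by rewrite trmxK mulmx1C.
by rewrite -!mulmxA enorm_orthomx // -(enorm_orthomx x QQt) Aa.
Qed.

Lemma specnorm_ge0 N (A : 'M[R]_N) : 0 <= specnorm A.
Proof.
rewrite /specnorm.
have [supA|] := pselect (has_sup [set enorm (A *m x) | x in [set x | enorm x = 1]]).
  have [[y Ey] ubA] := supA.
  by apply: le_trans (ub_le_sup ubA Ey); case: Ey => x _ <-; exact: enorm_ge0.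
by move=> /sup_out ->.
Qed.

Lemma specnorm_le N (A : 'M[R]_N) c : 0 <= c -> opnorm_le A c -> specnorm A <= c.
Proof.
move=> c0 Ac; rewrite /specnorm.
have [ne|empty] := pselect ([set enorm (A *m x) | x in [set x | enorm x = 1]] !=set0).
  by apply: ge_sup => // _ [x /= x1 <-]; rewrite -[c]mulr1 -x1 Ac.
suff -> : [set enorm (A *m x) | x in [set x | enorm x = 1]] = set0 by rewrite sup0.
by apply/seteqP; split => // y Ay; apply: empty; exists y.
Qed.

Lemma opnorm_le_specnorm N (A : 'M[R]_N) : opnorm_le A (specnorm A).
Proof.
move=> x; have [x0|x_neq0] := eqVneq (enorm x) 0.
  by rewrite (enorm_eq0 x0) mulmx0 !enorm0 mulr0.
have x_gt0 : 0 < enorm x by rewrite lt0r x_neq0 enorm_ge0.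
set u := (enorm x)^-1 *: x.
have u1 : enorm u = 1 by rewrite enormZ ger0_norm ?invr_ge0 ?enorm_ge0 // mulVf.
have xE : x = enorm x *: u by rewrite scalerA divff // scale1r.
rewrite {1}xE -scalemxAr enormZ ger0_norm ?enorm_ge0 // mulrC ler_wpM2r ?enorm_ge0 //.
apply: ub_le_sup; last by exists u.
exists (entry_norm_sum A) => _ [y /= y1 <-].
by rewrite -[leRHS]mulr1 -y1 opnorm_le_entry_norm_sum.
Qed.

Lemma orthomx_perm_mx N (s : 'S_N) : (perm_mx s)^T *m perm_mx s = 1%:M :> 'M[R]_N.
Proof. by rewrite tr_perm_mx -perm_mxM mulVg perm_mx1. Qed.

Lemma perm_dist_le_specnorm N (A Ahat : 'M[R]_N) (s : 'S_N) :
  perm_dist A Ahat <= specnorm ((perm_mx s)^T *m A - Ahat *m (perm_mx s)^T).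
Proof.
have -> : perm_dist A Ahat =
    inf [set specnorm ((perm_mx t)^T *m A - Ahat *m (perm_mx t)^T) | t in [set: 'S_N]].
  rewrite /perm_dist; congr inf; apply: eq_imagel => t _.
  rewrite /specnorm; congr sup; apply: eq_imagel => x _.
  by rewrite mulmxBl !mulmxA.
apply: ge_inf; last by exists s.
by exists 0 => _ [t _ <-]; exact: specnorm_ge0.
Qed.

End OperatorBound.

Section EntrywiseConvergence.
Variable R : realType.

Definition mx_cvg m n (M_ : nat -> 'M[R]_(m, n)) (L : 'M[R]_(m, n)) : Prop :=
  forall i j, (fun k => M_ k i j) @ \oo --> L i j.

Lemma mx_cvg_unique m n (M_ : nat -> 'M[R]_(m, n)) L L' :
  mx_cvg M_ L -> mx_cvg M_ L' -> L = L'.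
Proof.
move=> ML ML'; apply/matrixP => i j.
by rewrite -(cvg_lim _ (ML i j)) // -(cvg_lim _ (ML' i j)).
Qed.

Lemma mx_cvgB m n (M_ M'_ : nat -> 'M[R]_(m, n)) L L' :
  mx_cvg M_ L -> mx_cvg M'_ L' -> mx_cvg (fun k => M_ k - M'_ k) (L - L').
Proof.
move=> ML ML' i j; rewrite !mxE; under eq_fun do rewrite !mxE.
exact: cvgB.
Qed.

Lemma mx_cvg_mulmxl m n p (Q : 'M[R]_(m, n)) (M_ : nat -> 'M[R]_(n, p)) L :
  mx_cvg M_ L -> mx_cvg (fun k => Q *m M_ k) (Q *m L).
Proof.
move=> ML i j; rewrite mxE; under eq_fun do rewrite mxE.
apply: (@cvg_big _ _ +%R 0 xpredT add_continuous) => // l _.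
by apply: cvgM; [exact: cvg_cst | exact: ML].
Qed.

Lemma mx_cvg_mulmxr m n p (M_ : nat -> 'M[R]_(m, n)) L (Q : 'M[R]_(n, p)) :
  mx_cvg M_ L -> mx_cvg (fun k => M_ k *m Q) (L *m Q).
Proof.
move=> ML i j; rewrite mxE; under eq_fun do rewrite mxE.
apply: (@cvg_big _ _ +%R 0 xpredT add_continuous) => // l _.
by apply: cvgM; [exact: ML | exact: cvg_cst].
Qed.

Lemma enorm_mulmx_cvg N (M_ : nat -> 'M[R]_N) L (x : 'cV[R]_N) :
  mx_cvg M_ L -> (fun k => enorm (M_ k *m x)) @ \oo --> enorm (L *m x).
Proof.
move=> /(mx_cvg_mulmxr (Q := x)) MLx; rewrite /enorm.
apply: (@continuous_cvg _ _ _ _ _ (fun k => \sum_i (M_ k *m x) i 0 ^+ 2) Num.sqrt).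
  exact: sqrt_continuous.
apply: (@cvg_big _ _ +%R 0 xpredT add_continuous) => // i _.
by rewrite expr2; under eq_fun do rewrite expr2; apply: cvgM; exact: MLx.
Qed.

Lemma opnorm_le_mx_cvg N (M_ : nat -> 'M[R]_N) L c :
  mx_cvg M_ L -> (forall k, opnorm_le (M_ k) c) -> opnorm_le L c.
Proof.
move=> ML Mc x.
apply: (ler_cvg_to (enorm_mulmx_cvg (x := x) ML) (cvg_cst (c * enorm x))).
by apply: nearW => k; exact: Mc.
Qed.

End EntrywiseConvergence.

Section PartialFilter.
Variable R : realType.
Implicit Types (h : nat -> R) (c : R).

Definition partial_filter h N (A : 'M[R]_N) n : 'M[R]_N := \sum_(k < n) h k *: A ^+ k.

Lemma analytic_coef_bounded h t :
  analytic_filter h -> exists2 M : R, 0 < M & forall k, `|h k * t ^+ k| <= M.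
Proof.
move=> ha; have /ex_strict_bound_gt0[M M0 HM] := cvg_series_bounded (ha t).
by exists M => // k; exact/ltW/HM.
Qed.

Lemma normr_entry_exprn_le N (A : 'M[R]_N) k i j :
  `|(A ^+ k) i j| <= (entry_norm_sum A + 1) ^+ k.
Proof.
have row_le l : \sum_j `|A l j| <= entry_norm_sum A + 1.
  apply: le_trans (_ : _ <= entry_norm_sum A) _; last by rewrite lerDl.
  rewrite /entry_norm_sum [leRHS](bigD1 l) //= lerDl.
  by apply: sumr_ge0 => i' _; apply: sumr_ge0.
elim: k i j => [|k IHk] i j.
  by rewrite expr0 mxE; case: (i == j); rewrite ?normr1 ?normr0.
rewrite exprS -mulmxE mxE; apply: le_trans (ler_norm_sum _ _ _) _.
apply: le_trans (_ : \sum_l `|A i l| * (entry_norm_sum A + 1) ^+ k <= _).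
  by apply: ler_sum => l _; rewrite normrM ler_wpM2l.
by rewrite -mulr_suml exprS ler_wpM2r ?exprn_ge0 ?addr_ge0 ?entry_norm_sum_ge0.
Qed.

Lemma partial_filter_cvg h N (A : 'M[R]_N) :
  analytic_filter h -> mx_cvg (partial_filter h A) (graph_filter h A).
Proof.
move=> ha i j; rewrite mxE.
have -> : (fun n => partial_filter h A n i j) = series (fun k => h k * (A ^+ k) i j).
  apply/funext => n; rewrite /partial_filter summxE /series /= big_mkord.
  by apply: eq_bigr => k _; rewrite mxE.
set r := entry_norm_sum A + 1.
have r0 : 0 <= r by rewrite addr_ge0 ?entry_norm_sum_ge0.
(* Bounding the coefficients at [2 r] dominates the terms by [M (1/2)^k]. *)
have [M M0 HM] := analytic_coef_bounded (2 * r) ha.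
have term_le k : `|h k * (A ^+ k) i j| <= geometric M 2^-1 k.
  rewrite /geometric /= normrM; apply: le_trans (_ : `|h k| * r ^+ k <= _).
    by rewrite ler_wpM2l // normr_entry_exprn_le.
  have := HM k; rewrite normrM (ger0_norm (exprn_ge0 _ _)) ?mulr_ge0 // exprMn => hk.
  rewrite -(ler_pM2r (exprn_gt0 k (ltr0n _ 2 : (0 : R) < 2))) -mulrA exprVn.
  by rewrite divfK ?expf_neq0 // (mulrC (r ^+ k)).
apply/normed_cvg/(series_le_cvg _ _ term_le) => [k|k|].
- exact: normr_ge0.
- by rewrite geometric_ge0 ?ltW ?invr_ge0.
- by apply: is_cvg_geometric_series; rewrite gtr0_norm ?invr_gt0 // invf_lt1 // ltr1n.
Qed.

Lemma partial_filter_conj h N (Q A : 'M[R]_N) n : Q^T *m Q = 1%:M ->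
  partial_filter h (Q *m A *m Q^T) n = Q *m partial_filter h A n *m Q^T.
Proof.
move=> QtQ; have conj_exprn k : (Q *m A *m Q^T) ^+ k = Q *m A ^+ k *m Q^T.
  elim: k => [|k IHk]; first by rewrite !expr0 mulmx1 mulmx1C.
  by rewrite exprS IHk !exprS -!mulmxE !mulmxA -(mulmxA _ Q^T Q) QtQ mulmx1.
rewrite /partial_filter mulmx_sumr mulmx_suml; apply: eq_bigr => k _.
by rewrite conj_exprn scalemxAl scalemxAr.
Qed.

Lemma graph_filter_conj h N (Q A : 'M[R]_N) : analytic_filter h -> Q^T *m Q = 1%:M ->
  graph_filter h (Q *m A *m Q^T) = Q *m graph_filter h A *m Q^T.
Proof.
move=> ha QtQ; apply: mx_cvg_unique (partial_filter_cvg (A := Q *m A *m Q^T) ha) _.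
have -> : partial_filter h (Q *m A *m Q^T) = fun n => Q *m partial_filter h A n *m Q^T.
  by apply/funext => n; exact: partial_filter_conj.
exact/mx_cvg_mulmxr/mx_cvg_mulmxl/partial_filter_cvg/ha.
Qed.

Definition dilate_filter h c k := h k * c ^+ k.

Lemma dilate_filter_termE h c (l : R) :
  (fun k => dilate_filter h c k * l ^+ k) = (fun k => h k * (c * l) ^+ k).
Proof. by apply/funext => k; rewrite /dilate_filter exprMn mulrA. Qed.

Lemma freq_resp_dilate h c (l : R) : freq_resp (dilate_filter h c) l = freq_resp h (c * l).
Proof. by rewrite /freq_resp dilate_filter_termE. Qed.

Lemma analytic_dilate h c : analytic_filter h -> analytic_filter (dilate_filter h c).
Proof. by move=> ha l; rewrite dilate_filter_termE. Qed.

Lemma mx_exprZn N (c : R) (A : 'M[R]_N) k : (c *: A) ^+ k = c ^+ k *: A ^+ k.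
Proof.
elim: k => [|k IHk]; first by rewrite !expr0 scale1r.
by rewrite !exprS IHk -!mulmxE -scalemxAl -scalemxAr scalerA.
Qed.

Lemma graph_filter_dilate h c N (A : 'M[R]_N) :
  graph_filter (dilate_filter h c) A = graph_filter h (c *: A).
Proof.
apply/matrixP => i j; rewrite !mxE.
suff -> : (fun k => dilate_filter h c k * (A ^+ k) i j) = (fun k => h k * ((c *: A) ^+ k) i j).
  by [].
by apply/funext => k; rewrite mx_exprZn mxE mulrA.
Qed.

Lemma sub_filter_termE h1 h2 (l : R) :
  (fun k => (h1 \- h2) k * l ^+ k) = (fun k => h1 k * l ^+ k) - (fun k => h2 k * l ^+ k).
Proof. by apply/funext => k; rewrite /= mulrBl. Qed.

Lemma analyticB h1 h2 :
  analytic_filter h1 -> analytic_filter h2 -> analytic_filter (h1 \- h2).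
Proof. by move=> ha1 ha2 l; rewrite sub_filter_termE; exact: is_cvg_seriesB. Qed.

Lemma freq_respB h1 h2 (l : R) : analytic_filter h1 -> analytic_filter h2 ->
  freq_resp (h1 \- h2) l = freq_resp h1 l - freq_resp h2 l.
Proof. by move=> ha1 ha2; rewrite /freq_resp sub_filter_termE lim_seriesB. Qed.

Lemma graph_filterB h1 h2 N (A : 'M[R]_N) : analytic_filter h1 -> analytic_filter h2 ->
  graph_filter (h1 \- h2) A = graph_filter h1 A - graph_filter h2 A.
Proof.
move=> ha1 ha2; apply: mx_cvg_unique (partial_filter_cvg (A := A) (analyticB ha1 ha2)) _.
have -> : partial_filter (h1 \- h2) A = fun n => partial_filter h1 A n - partial_filter h2 A n.
  apply/funext => n; rewrite /partial_filter -sumrB.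
  by apply: eq_bigr => k _; rewrite scalerBl.
by apply: mx_cvgB; exact: partial_filter_cvg.
Qed.

End PartialFilter.

Section SpectralBound.
Local Open Scope sesquilinear_scope.
Variable R : realType.
Local Notation C := R[i].
Local Notation realc := (real_complex R).

Definition csum_sqr N (z : 'cV[C]_N) : C := \sum_i `|z i 0| ^+ 2.

Lemma csum_sqr_unitary N (P : 'M[C]_N) (z : 'cV[C]_N) :
  P \is unitarymx -> csum_sqr (P ^t* *m z) = csum_sqr z.
Proof.
have csum_sqrE (u : 'cV[C]_N) : csum_sqr u = (u ^t* *m u) 0 0.
  by rewrite /csum_sqr mxE; apply: eq_bigr => i _; rewrite !mxE normCK mulrC.
move=> /unitarymxP PPt; rewrite !csum_sqrE trmx_mul map_mxM trmxCK.
by rewrite mulmxA -(mulmxA _ P) PPt mulmx1.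
Qed.

Lemma csum_sqr_diag N (a : 'rV[C]_N) (z : 'cV[C]_N) :
  csum_sqr (diag_mx a *m z) = \sum_l `|a 0 l| ^+ 2 * `|z l 0| ^+ 2.
Proof. by apply: eq_bigr => l _; rewrite mul_diag_mx mxE normrM exprMn. Qed.

Lemma realc_real (r : R) : realc r \is Num.real.
Proof. by apply/complex_realP; exists r. Qed.

Lemma csum_sqr_realc N (y : 'cV[R]_N) :
  csum_sqr (map_mx realc y) = realc (\sum_i y i 0 ^+ 2).
Proof.
rewrite rmorph_sum; apply: eq_bigr => i _.
by rewrite mxE rmorphXn /= real_normK ?realc_real.
Qed.

Lemma real_sym_spectral N (A : 'M[R]_N) : A^T = A ->
  exists2 P : 'M[C]_N, P \is unitarymx &
    exists d : 'I_N -> R, map_mx realc A = P ^t* *m diag_mx (\row_l realc (d l)) *m P.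
Proof.
move=> Asym; set Ac := map_mx realc A.
have Ac_herm : Ac \is hermsymmx.
  apply: realsym_hermsym; last by apply/mxOverP => i j; rewrite mxE realc_real.
  by apply/is_hermitianmxP; rewrite expr0 scale1r map_mx_id // map_trmx Asym.
have /orthomx_spectralP AcE := hermitian_normalmx Ac_herm.
have /mxOverP dreal := hermitian_spectral_diag_real Ac_herm.
have Pu := spectral_unitarymx Ac.
exists (spectralmx Ac) => //; exists (fun l => complex.Re (spectral_diag Ac 0 l)).
rewrite -invmx_unitary // {1}AcE; congr (_ *m diag_mx _ *m _).
by apply/rowP => l; rewrite mxE RRe_real.
Qed.

Lemma unitary_conj_exprn N (P D : 'M[C]_N) k : P \is unitarymx ->
  (P ^t* *m D *m P) ^+ k = P ^t* *m D ^+ k *m P.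
Proof.
move=> Pu; have PtP : P ^t* *m P = 1%:M by rewrite -invmx_unitary // mulVmx ?unitarymx_unit.
elim: k => [|k IHk]; first by rewrite !expr0 mulmx1 PtP.
by rewrite exprS IHk exprS -!mulmxE !mulmxA -(mulmxA _ P) (unitarymxP Pu) mulmx1.
Qed.

Lemma diag_mx_exprn N (a : 'rV[C]_N) k : diag_mx a ^+ k = diag_mx (\row_l (a 0 l ^+ k)).
Proof.
elim: k => [|k IHk]; first by apply/matrixP => i j; rewrite expr0 !mxE expr0.
rewrite exprS IHk -mulmxE mulmx_diag; congr diag_mx.
by apply/rowP => l; rewrite !mxE exprS.
Qed.

Lemma map_partial_filter_spectral (g : nat -> R) N (A : 'M[R]_N) (P : 'M[C]_N) (d : 'I_N -> R) n :
  P \is unitarymx -> map_mx realc A = P ^t* *m diag_mx (\row_l realc (d l)) *m P ->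
  map_mx realc (partial_filter g A n) =
    P ^t* *m diag_mx (\row_l realc (series (fun k => g k * d l ^+ k) n)) *m P.
Proof.
move=> Pu AE; have map_exprn k : map_mx realc (A ^+ k) = map_mx realc A ^+ k.
  by elim: k => [|k IHk]; rewrite ?map_mx1 // !exprS -!mulmxE map_mxM IHk.
rewrite /partial_filter map_mx_sum.
under eq_bigr do rewrite map_mxZ map_exprn AE unitary_conj_exprn // diag_mx_exprn.
under eq_bigr do rewrite scalemxAl scalemxAr.
rewrite -mulmx_suml -mulmx_sumr; congr (_ *m _ *m _).
apply/matrixP => i j; rewrite summxE !mxE /series /= big_mkord rmorph_sum -sumrMnl.
by apply: eq_bigr => k _; rewrite !mxE rmorphM rmorphXn mulrnAr.
Qed.

(* [d] lists the eigenvalues of [A], [w] the squared coordinates of [x] in an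
   orthonormal eigenbasis. *)
Lemma sym_mx_spectral_weights N (A : 'M[R]_N) : A^T = A ->
  exists d : 'I_N -> R, forall x : 'cV[R]_N, exists2 w : 'I_N -> R, (forall l, 0 <= w l) &
    forall (g : nat -> R) n, enorm (partial_filter g A n *m x) ^+ 2 =
      \sum_l series (fun k => g k * d l ^+ k) n ^+ 2 * w l.
Proof.
move=> /real_sym_spectral[P Pu [d AE]]; exists d => x.
set u := P *m map_mx realc x.
have u_real l : `|u l 0| ^+ 2 \is Num.real by rewrite realX ?normr_real.
exists (fun l => complex.Re (`|u l 0| ^+ 2)) => [l|g n].
  by rewrite -ler0c RRe_real // exprn_ge0.
apply: (@complexI R); rewrite enorm_sqr -csum_sqr_realc map_mxM.
rewrite (map_partial_filter_spectral _ _ Pu AE) -!mulmxA csum_sqr_unitary //.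
rewrite csum_sqr_diag rmorph_sum; apply: eq_bigr => l _.
rewrite rmorphM mxE rmorphXn real_normK ?realc_real //; congr (_ * _).
exact/esym/RRe_real.
Qed.

End SpectralBound.

Section FilterBounds.
Variable R : realType.
Implicit Types (h g : nat -> R).

Lemma opnorm_le_graph_filter_sym g N (A : 'M[R]_N) (m : R) :
  A^T = A -> analytic_filter g -> (forall l, `|freq_resp g l| <= m) ->
  opnorm_le (graph_filter g A) m.
Proof.
move=> Asym ga gm x; have [d /(_ x)[w w0 Hw]] := sym_mx_spectral_weights Asym.
have m0 : 0 <= m := le_trans (normr_ge0 _) (gm 0).
have w_sum : \sum_l w l = enorm x ^+ 2.
  have := Hw (fun _ => 1) 1%N; rewrite /partial_filter big_ord1 expr0 scale1r mul1mx => ->.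
  by apply: eq_bigr => l _; rewrite /series /= big_nat1 expr0 mulr1 expr1n mul1r.
have Hx_sqr : enorm (graph_filter g A *m x) ^+ 2 = \sum_l freq_resp g (d l) ^+ 2 * w l.
  have Hx_cvg := enorm_mulmx_cvg (x := x) (partial_filter_cvg (A := A) ga).
  have sqr_cvg : (fun n => enorm (partial_filter g A n *m x) ^+ 2) @ \oo -->
      enorm (graph_filter g A *m x) ^+ 2.
    by rewrite expr2; under eq_fun do rewrite expr2; exact: cvgM.
  have weights_cvg : (fun n => enorm (partial_filter g A n *m x) ^+ 2) @ \oo -->
      \sum_l freq_resp g (d l) ^+ 2 * w l.
    under eq_fun do rewrite Hw.
    apply: (@cvg_big _ _ +%R 0 xpredT add_continuous) => // l _.
    apply: cvgM; last exact: cvg_cst.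
    by rewrite expr2; under eq_fun do rewrite expr2; apply: cvgM; exact: ga.
  by rewrite -(cvg_lim _ sqr_cvg) // (cvg_lim _ weights_cvg).
rewrite -(@ler_pXn2r _ 2) ?nnegrE ?mulr_ge0 ?enorm_ge0 // Hx_sqr exprMn -w_sum.
rewrite mulr_sumr; apply: ler_sum => l _; rewrite ler_wpM2r // -real_normK ?num_real //.
by rewrite lerXn2r ?nnegrE.
Qed.

Lemma opnorm_le_graph_filterB_sym h N (A B : 'M[R]_N) :
  analytic_filter h -> bounded_filter h -> A^T = A -> B^T = B ->
  opnorm_le (graph_filter h A - graph_filter h B) 2.
Proof.
move=> ha hb Asym Bsym; have -> : (2 : R) = 1 + 1 by [].
by apply: opnorm_leD; [|apply: opnorm_leN]; exact: opnorm_le_graph_filter_sym.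
Qed.

Lemma opnorm_le_exprnB N (A B : 'M[R]_N) (r f : R) k :
  1 <= r -> 0 <= f -> opnorm_le A r -> opnorm_le B r -> opnorm_le (A - B) f ->
  opnorm_le (A ^+ k - B ^+ k) (k%:R * r ^+ k * f).
Proof.
move=> r1 f0 Ar Br ABf; have r0 : 0 <= r := le_trans ler01 r1.
elim: k => [|k IHk]; first by rewrite !expr0 subrr !mul0r; exact: opnorm_le0.
have -> : A ^+ k.+1 - B ^+ k.+1 = A *m (A ^+ k - B ^+ k) + (A - B) *m B ^+ k.
  by rewrite !exprS !mulmxE mulrBr mulrBl addrA subrK.
apply: opnorm_le_trans.
  apply: opnorm_leD; first exact: opnorm_leM r0 Ar IHk.
  exact: opnorm_leM f0 ABf (opnorm_leX k r0 Br).
have rk0 : 0 <= r ^+ k := exprn_ge0 k r0.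
have hint : 0 <= f * r ^+ k * (r - 1) by rewrite !mulr_ge0 ?subr_ge0.
rewrite exprS -addn1 natrD; nra.
Qed.

Lemma opnorm_le_graph_filterB h N (A B : 'M[R]_N) (r f M : R) :
  analytic_filter h -> (forall k, `|h k * (4 * r) ^+ k| <= M) ->
  1 <= r -> 0 <= f -> opnorm_le A r -> opnorm_le B r -> opnorm_le (A - B) f ->
  opnorm_le (graph_filter h A - graph_filter h B) (2 * M * f).
Proof.
move=> ha hM r1 f0 Ar Br ABf; have r0 : 0 <= r := le_trans ler01 r1.
have M0 : 0 <= M := le_trans (normr_ge0 _) (hM 0%N).
apply: opnorm_le_mx_cvg (mx_cvgB (partial_filter_cvg (A := A) ha) (partial_filter_cvg (A := B) ha)) _ => n.
have -> : partial_filter h A n - partial_filter h B n = \sum_(k < n) h k *: (A ^+ k - B ^+ k).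
  by rewrite /partial_filter -sumrB; apply: eq_bigr => k _; rewrite scalerBr.
apply: opnorm_le_trans.
  apply: (opnorm_le_sum (c := fun k : 'I_n => `|h k| * (k%:R * r ^+ k * f))) => k.
  exact/opnorm_leZ/opnorm_le_exprnB.
(* [k r^k <= (4 r)^k / 2^k] turns the bound into a geometric series of ratio 1/2. *)
apply: le_trans (_ : \sum_(k < n) M * f * 2^-1 ^+ k <= _).
  apply: ler_sum => k _; rewrite !mulrA (mulrAC M f) ler_wpM2r //.
  have := hM k; rewrite normrM normrX (ger0_norm (_ : 0 <= 4 * r)) ?mulr_ge0 // exprMn.
  have -> : (4 : R) ^+ k = 2 ^+ k * 2 ^+ k by rewrite -exprMn -natrM.
  have k_le : k%:R <= (2 : R) ^+ k by rewrite -natrX ler_nat ltnW // ltn_expl.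
  have two_k : 0 < (2 : R) ^+ k by rewrite exprn_gt0.
  rewrite -(ler_pM2r two_k) exprVn mulfVK ?gt_eqF //; apply: le_trans.
  rewrite -!mulrA; apply: ler_wpM2l => //.
  have : 0 <= (2 ^+ k - k%:R) * (r ^+ k * 2 ^+ k).
    apply: mulr_ge0; first by rewrite subr_ge0.
    by apply: mulr_ge0; apply: exprn_ge0 => //; exact: ltW.
  nra.
rewrite -mulr_sumr mulrAC; apply: ler_wpM2r => //; rewrite mulrC; apply: ler_wpM2r => //.
have := subrX1 (2^-1 : R) n; have : 0 <= (2^-1 : R) ^+ n by rewrite exprn_ge0.
set t := _ ^+ n; set S := \sum_(_ < _) _; lra.
Qed.

End FilterBounds.

Section Perturbation.
Variable R : realType.

Lemma integral_lipschitz_dilate (h : nat -> R) C (d l : R) :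
  integral_lipschitz h C -> `|d| <= 2^-1 ->
  `|freq_resp h l - freq_resp h ((1 + 2 * d) * l)| <= 2 * C * `|d| + 4 * C * `|d| ^+ 2.
Proof.
move=> [C0 hL] d_le; have d0 := normr_ge0 d.
have [->|l_neq0] := eqVneq l 0; first by rewrite mulr0 subrr normr0; nra.
set u := `|_ - _|; have u0 : 0 <= u := normr_ge0 _.
have hint : 0 <= C * `|d| ^+ 2 * (1 - 2 * `|d|).
  by apply: mulr_ge0; [apply: mulr_ge0; [exact: ltW | exact: sqr_ge0] | lra].
have one_d : 1 - `|d| <= `|1 + d|.
  by have := ler_normD (1 + d) (- d); rewrite addrK normrN normr1; lra.
have : u * `|1 + d| <= 2 * C * `|d|.
  have := hL l ((1 + 2 * d) * l); rewrite distrC -/u.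
  rewrite (_ : l + _ = 2 * ((1 + d) * l)); last by ring.
  rewrite (_ : _ * l - l = 2 * (d * l)); last by ring.
  rewrite !normrM normr_nat (mulrC 2) mulfK // [u * _]mulrA.
  rewrite (_ : C * (2 * (`|d| * `|l|)) = 2 * C * `|d| * `|l|); last by ring.
  by rewrite ler_pM2r ?normr_gt0.
(* [u <= 2 C |d| / (1 - |d|) <= 2 C |d| (1 + 2 |d|)] since [|d| <= 1/2]. *)
nra.
Qed.

Lemma opnorm_le_normalized_sub_scalar N (E : 'M[R]_N) (sg eps : R) :
  specnorm ((specnorm E)^-1 *: E - sg *: 1%:M) <= eps ->
  opnorm_le (E - (sg * specnorm E) *: 1%:M) (specnorm E * eps).
Proof.
set e := specnorm E => D_le; have [e0|e_neq0] := eqVneq e 0.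
  by rewrite e0 mulr0 scale0r subr0 mul0r -e0; exact: opnorm_le_specnorm.
have -> : E - (sg * e) *: 1%:M = e *: (e^-1 *: E - sg *: 1%:M).
  by rewrite scalerBr !scalerA mulfV // scale1r mulrC.
have -> : e * eps = `|e| * eps by rewrite ger0_norm ?specnorm_ge0.
apply: opnorm_leZ.
exact: opnorm_le_trans (opnorm_le_specnorm _) D_le.
Qed.

Lemma opnorm_le_sub_scalar_of_min N (E : 'M[R]_N) (eps : R) :
  Num.min (specnorm ((specnorm E)^-1 *: E - 1%:M))
          (specnorm ((specnorm E)^-1 *: E + 1%:M)) <= eps ->
  exists2 d : R, `|d| = specnorm E & opnorm_le (E - d *: 1%:M) (specnorm E * eps).
Proof.
have e0 := specnorm_ge0 E; rewrite ge_min => /orP[D_le|D_le].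
  exists (specnorm E); first exact: ger0_norm.
  have := opnorm_le_normalized_sub_scalar (E := E) (sg := 1) (eps := eps).
  by rewrite scale1r mul1r; apply.
exists (- specnorm E); first by rewrite normrN ger0_norm.
have := opnorm_le_normalized_sub_scalar (E := E) (sg := -1) (eps := eps).
by rewrite scaleN1r opprK mulN1r; apply.
Qed.

Lemma opnorm_le_rel_pert N (P S Shat E : 'M[R]_N) (d a s : R) :
  P^T *m P = 1%:M -> P^T *m Shat *m P = S + (E *m S + S *m E) ->
  0 <= a -> 0 <= s -> opnorm_le (E - d *: 1%:M) a -> opnorm_le S s ->
  opnorm_le (Shat - (1 + 2 * d) *: (P *m S *m P^T)) (2 * a * s).
Proof.
move=> PtP Shat_pert a0 s0 Fa Ss; set F := E - d *: 1%:M.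
have PPt : P *m P^T = 1%:M by rewrite mulmx1C.
have -> : Shat - (1 + 2 * d) *: (P *m S *m P^T) = P *m (F *m S + S *m F) *m P^T.
  have -> : F *m S + S *m F = S + (E *m S + S *m E) - (1 + 2 * d) *: S.
    rewrite /F mulmxBl mulmxBr -scalemxAl -scalemxAr mul1mx mulmx1.
    by apply/matrixP => i j; rewrite !mxE; ring.
  rewrite -Shat_pert mulmxBr mulmxBl -scalemxAr -scalemxAl !mulmxA PPt mul1mx.
  by rewrite -(mulmxA Shat) PPt mulmx1.
apply: opnorm_le_conj_orthomx PtP _.
rewrite (_ : 2 * a * s = a * s + s * a); last by ring.
by apply: opnorm_leD; apply: opnorm_leM.
Qed.

Lemma opnorm_le_graph_filter_near_dilation (h : nat -> R) C N (A B : 'M[R]_N) (d r f M : R) :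
  analytic_filter h -> integral_lipschitz h C -> (forall k, `|h k * (4 * r) ^+ k| <= M) ->
  A^T = A -> `|d| <= 2^-1 -> 1 <= r -> 0 <= f ->
  opnorm_le ((1 + 2 * d) *: A) r -> opnorm_le B r -> opnorm_le (B - (1 + 2 * d) *: A) f ->
  opnorm_le (graph_filter h A - graph_filter h B)
            (2 * C * `|d| + 4 * C * `|d| ^+ 2 + 2 * M * f).
Proof.
move=> ha hL hM Asym d_le r1 f0 Ar Br BAf; set c := 1 + 2 * d.
have -> : graph_filter h A - graph_filter h B =
    (graph_filter h A - graph_filter h (c *: A)) + (graph_filter h (c *: A) - graph_filter h B).
  by rewrite addrA subrK.
have hca := analytic_dilate (c := c) ha.
apply: opnorm_leD.
  rewrite -graph_filter_dilate -graph_filterB //.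
  apply: opnorm_le_graph_filter_sym => //; first exact: analyticB.
  by move=> l; rewrite freq_respB // freq_resp_dilate; exact: integral_lipschitz_dilate.
apply: opnorm_le_graph_filterB hM r1 f0 Ar Br _ => //.
by rewrite -opprB; exact: opnorm_leN.
Qed.

Lemma opnorm_le_graph_filter_rel_pert (h : nat -> R) C M N (A B : 'M[R]_N) (d s eps : R) :
  analytic_filter h -> integral_lipschitz h C ->
  (forall k, `|h k * (4 * (2 * s + 2)) ^+ k| <= M) ->
  A^T = A -> 0 <= s -> opnorm_le A s -> `|d| <= eps -> eps < 4^-1 ->
  opnorm_le (B - (1 + 2 * d) *: A) (2 * (`|d| * eps) * s) ->
  opnorm_le (graph_filter h A - graph_filter h B)
            (2 * C * eps + (4 * C + 4 * M * s) * eps ^+ 2).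
Proof.
move=> ha hL hM Asym s0 As d_le eps_lt BAf; set c := 1 + 2 * d; set f := 2 * (`|d| * eps) * s.
have [C0 _] := hL; have d0 := normr_ge0 d; have eps0 := le_trans d0 d_le.
have M0 : 0 <= M := le_trans (normr_ge0 _) (hM 0%N).
have f0 : 0 <= f by apply: mulr_ge0 => //; apply: mulr_ge0 => //; exact: mulr_ge0.
have c_le : `|c| <= 3 / 2 by rewrite (le_trans (ler_normD _ _)) // normr1 normrM normr_nat; lra.
have cA : opnorm_le (c *: A) (2 * s + 2) by apply: opnorm_le_trans (opnorm_leZ c As) _; nra.
have B_le : opnorm_le B (2 * s + 2).
  rewrite -(subrK (c *: A) B); apply: opnorm_le_trans (opnorm_leD BAf (opnorm_leZ c As)) _.
  have : 0 <= (4^-1 * 4^-1 - `|d| * eps) * s by apply: mulr_ge0 => //; nra.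
  by rewrite /f; nra.
apply: opnorm_le_trans.
  by apply: opnorm_le_graph_filter_near_dilation ha hL hM Asym _ _ f0 cA B_le BAf; lra.
have eps_d : 0 <= eps - `|d| by rewrite subr_ge0.
have := mulr_ge0 (mulr_ge0 (mulr_ge0 M0 s0) eps0) eps_d.
have := mulr_ge0 (ltW C0) eps_d.
rewrite /f; nra.
Qed.

End Perturbation.

Theorem theorem3 (R : realType) (N : nat) (S V Lam : 'M[R]_N)
  (h : nat -> R) (C : R) :
  symmetric_mx S -> orthonormal_mx V -> is_diag_mx Lam ->
  S = V *m Lam *m V^T ->
  analytic_filter h -> bounded_filter h -> integral_lipschitz h C ->
  exists K : R,
    forall (Shat E U M : 'M[R]_N) (eps : R),
      symmetric_mx Shat ->
      orthonormal_mx U -> is_diag_mx M -> E = U *m M *m U^T ->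
      E \in rel_pert_set S Shat ->
      rel_pert_dist S Shat <= specnorm E ->
      specnorm E <= eps ->
      Num.min (specnorm ((specnorm E)^-1 *: E - 1%:M))
              (specnorm ((specnorm E)^-1 *: E + 1%:M)) <= eps ->
      perm_dist (graph_filter h S) (graph_filter h Shat)
        <= 2 * C * eps + K * eps ^+ 2.
Proof.
move=> Ssym _ _ _ ha hb hL; have [C0 _] := hL.
set s := entry_norm_sum S; have s0 : 0 <= s := entry_norm_sum_ge0 S.
have [M M0 hM] := analytic_coef_bounded (4 * (2 * s + 2)) ha.
exists (4 * C + 4 * M * s + 32).
move=> Shat E _ _ eps Shsym _ _ _ /set_mem[σ Shat_pert] _ Ee /opnorm_le_sub_scalar_of_min[d de Ed].
have eps0 : 0 <= eps := le_trans (specnorm_ge0 E) Ee.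
set P := perm_mx σ in Shat_pert; have PtP : P^T *m P = 1%:M := orthomx_perm_mx R σ.
set S0 := P *m S *m P^T; have S0sym : S0^T = S0 by rewrite !trmx_mul trmxK Ssym mulmxA.
apply: le_trans (perm_dist_le_specnorm _ _ σ^-1) _; rewrite tr_perm_mx invgK -/P.
have -> : P *m graph_filter h S - graph_filter h Shat *m P =
    (graph_filter h S0 - graph_filter h Shat) *m P.
  by rewrite mulmxBl graph_filter_conj // -(mulmxA _ P^T) PtP mulmx1.
apply: specnorm_le; first by apply: addr_ge0; apply: mulr_ge0; nra.
apply: (opnorm_le_mulmx_orthomx PtP).
have [eps_ge|eps_lt] := lerP 4^-1 eps.
  apply: opnorm_le_trans (opnorm_le_graph_filterB_sym ha hb S0sym Shsym) _.
  have : 0 <= (4 * C + 4 * M * s) * eps ^+ 2 by rewrite mulr_ge0 ?sqr_ge0 //; nra.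
  nra.
have S0_pert := opnorm_le_rel_pert PtP Shat_pert (mulr_ge0 (specnorm_ge0 E) eps0) s0 Ed
  (opnorm_le_entry_norm_sum S).
rewrite -de in S0_pert; apply: opnorm_le_trans.
  apply: opnorm_le_graph_filter_rel_pert ha hL hM S0sym s0 _ _ eps_lt S0_pert.
    exact: opnorm_le_conj_orthomx PtP (opnorm_le_entry_norm_sum S).
  by rewrite de.
have : 0 <= eps ^+ 2 := sqr_ge0 eps.
nra.
Qed.
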